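(* For $n\in\mathbb{Z}_+^I$, $j\in\mathcal{J}^\circ$ and $i\in\mathcal{I}$ with $j\in i$, $$E\,M^\circ_{ji}(n)=\frac{1}{\mu_{ji}}\frac{B^{+j}(n-e_i)}{B(n)},$$ where $e_i$ is the $i$-th unit vector.
   Context: Closed multiclass network: finite queue set $\mathcal{J}$, finite route set $\mathcal{I}$, each route a subset of $\mathcal{J}$ with a cyclic visiting order (each queue at most once), rates $\mu_{ji}>0$ for $j\in i$. For $k\in\mathbb{Z}_+^I$, $\mathcal{S}(k)$ is the set of $m=(m_{ji}: j\in i)$ with nonnegative integer entries and $\sum_{j\in i}m_{ji}=k_i$, $m_j=\sum_{i: j\in i}m_{ji}$; the stationary distribution is $\pi(m\mid k)=B(k)^{-1}\prod_{j}\big(\frac{m_j!}{\prod_{i: j\in i}m_{ji}!}\prod_{i: j\in i}\mu_{ji}^{-m_{ji}}\big)$ with normalizing constant $B(k)$. $\Lambda^*(n)$ is the unique optimizer of: maximize $\sum_i n_i\log\Lambda_i$ s.t. $\sum_{i: j\in i}\Lambda_i/\mu_{ji}\le1$ for all $j$, $\Lambda\ge0$, and $\mathcal{J}^\circ=\{j:\sum_{i: j\in i}\Lambda^*_i(n)/\mu_{ji}<1\}$. $M^\circ_{ji}(n)$ is the number of route-$i$ customers at queue $j$ under the stationary distribution $\pi(\cdot\mid n)$. $B^{+j}(k)$ is the normalizing constant (same formula) of the closed network obtained by adding a replica of queue $j$ immediately after $j$ on every route through $j$, with the same rates $\mu_{ji}$ at the replica. *)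

From HB Require Import structures.
From mathcomp Require Import all_boot all_order all_algebra.
From mathcomp Require Import reals exp.
Set Implicit Arguments. Unset Strict Implicit. Unset Printing Implicit Defensive.
Import Order.TTheory GRing.Theory Num.Theory.
Local Open Scope ring_scope.

(* A closed multiclass network: finite queue type Q, finite route type I,
   route i : {set Q} the queues visited by route i (each at most once; the
   cyclic visiting order does not enter any quantity below), rates mu q i. *)

Definition cfg_bound (I : finType) (k : I -> int) : nat := (\sum_i `|k i|)%N.

(* m : Q*I -> 'I_(K.+1) encodes (m_{qi}); membership in S(k). *)
Definition in_S (Q I : finType) (route : I -> {set Q}) (k : I -> int) (K : nat)
  (m : {ffun Q * I -> 'I_K.+1}) : bool :=
  [forall q, forall i, (q \notin route i) ==> (val (m (q, i)) == 0%N)] &&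
  [forall i, ((\sum_(q in route i) val (m (q, i)))%N)%:Z == k i].

Definition occ (Q I : finType) (route : I -> {set Q}) (K : nat)
  (m : {ffun Q * I -> 'I_K.+1}) (q : Q) : nat :=
  (\sum_(i | q \in route i) val (m (q, i)))%N.

Definition weight (R : realType) (Q I : finType) (route : I -> {set Q})
  (mu : Q -> I -> R) (K : nat) (m : {ffun Q * I -> 'I_K.+1}) : R :=
  \prod_q ( ((occ route m q)`!)%:R
            / (\prod_(i | q \in route i) ((val (m (q, i)))`!)%:R)
            * \prod_(i | q \in route i) (mu q i) ^- (val (m (q, i))) ).

(* normalizing constant B(k); S(k) is empty (B(k) = 0) if some k_i < 0 *)
Definition Bconst (R : realType) (Q I : finType) (route : I -> {set Q})
  (mu : Q -> I -> R) (k : I -> int) : R :=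
  \sum_(m : {ffun Q * I -> 'I_(cfg_bound k).+1} | in_S route k m) weight route mu m.

Definition natvec (I : finType) (n : I -> nat) : I -> int := fun i => (n i)%:Z.

Definition minus_e (I : finType) (n : I -> nat) (i : I) : I -> int :=
  fun i' => (n i')%:Z - (i' == i)%:Z.

Definition EM (R : realType) (Q I : finType) (route : I -> {set Q})
  (mu : Q -> I -> R) (n : I -> nat) (j : Q) (i : I) : R :=
  \sum_(m : {ffun Q * I -> 'I_(cfg_bound (natvec n)).+1} | in_S route (natvec n) m)
     (weight route mu m / Bconst route mu (natvec n)) * (val (m (j, i)))%:R.

(* network with a replica (None) of queue j inserted after j on every route through j *)
Definition plus_route (Q I : finType) (route : I -> {set Q}) (j : Q) :
  I -> {set option Q} :=
  fun i => (Some @: route i) :|: (if j \in route i then [set None] else set0).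

Definition plus_mu (R : realType) (Q I : finType) (mu : Q -> I -> R) (j : Q) :
  option Q -> I -> R :=
  fun q i => match q with Some q' => mu q' i | None => mu j i end.

Definition load (R : realType) (Q I : finType) (route : I -> {set Q})
  (mu : Q -> I -> R) (L : I -> R) (j : Q) : R :=
  \sum_(i | j \in route i) L i / mu j i.

Definition feasible (R : realType) (Q I : finType) (route : I -> {set Q})
  (mu : Q -> I -> R) (L : I -> R) : Prop :=
  (forall i, 0 <= L i) /\ (forall j, load route mu L j <= 1).

(* objective sum_i n_i log L_i; it is -oo when n_i > 0 and L_i = 0, so
   admissible points are feasible points with finite objective *)
Definition objective (R : realType) (I : finType) (n : I -> nat) (L : I -> R) : R :=
  \sum_i (n i)%:R * ln (L i).

Definition admissible (R : realType) (Q I : finType) (route : I -> {set Q})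
  (mu : Q -> I -> R) (n : I -> nat) (L : I -> R) : Prop :=
  feasible route mu L /\ (forall i, (0 < n i)%N -> 0 < L i).

Definition is_optimizer (R : realType) (Q I : finType) (route : I -> {set Q})
  (mu : Q -> I -> R) (n : I -> nat) (L : I -> R) : Prop :=
  admissible route mu n L /\
  (forall L', admissible route mu n L' -> objective n L' <= objective n L).

Definition in_Jcirc (R : realType) (Q I : finType) (route : I -> {set Q})
  (mu : Q -> I -> R) (n : I -> nat) (j : Q) : Prop :=
  exists L, is_optimizer route mu n L /\ load route mu L j < 1.

From HB Require Import structures.
From mathcomp Require Import all_boot all_order all_algebra.
From mathcomp Require Import reals exp.
From mathcomp Require Import ring zify.
Set Implicit Arguments. Unset Strict Implicit. Unset Printing Implicit Defensive.
Import Order.TTheory GRing.Theory Num.Theory.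
Local Open Scope ring_scope.

(* Merging queue j with its replica and adding one route-i customer at j maps each
   configuration of the augmented network with population n - e_i onto a configuration m of
   the original network with population n.  The fibre over m consists of the ways to split the
   counts m_j - e_i between j and the replica.  Weights factor over queues, and a multinomial
   Vandermonde identity sums the weights of j and its replica over the fibre to mu_ji m_ji
   times the weight of j in m.  Summing over m gives B^{+j}(n - e_i) = mu_ji B(n) E M_ji(n). *)

(* Compare the coefficients of 'X^t in (1 + 'X)^(\sum_r a r) = \prod_r (1 + 'X)^(a r). *)
Lemma sum_prod_binomial (I : finType) K (a : I -> nat) t :
  (forall r, a r <= K)%N ->
  (\sum_(b : {ffun I -> 'I_K.+1} | \sum_r val (b r) == t) \prod_r 'C(a r, b r))%N =
  'C(\sum_r a r, t).
Proof.
move=> aK; apply/eqP; rewrite -(eqr_nat int) natr_sum; apply/eqP.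
have binomialX r : ('X + 1 : {poly int}) ^+ a r = \sum_(k < K.+1) 'X^k *+ 'C(a r, k).
  rewrite exprD1n (big_ord_widen _ (fun k => 'X^k *+ 'C(a r, k)) (aK r : (a r).+1 <= K.+1)%N).
  by rewrite big_mkcond; apply: eq_bigr => k _; case: ltnP => // /bin_small ->.
have expandX : ('X + 1 : {poly int}) ^+ (\sum_r a r) =
    \sum_(b : {ffun I -> 'I_K.+1}) 'X^(\sum_r val (b r)) *+ \prod_r 'C(a r, b r).
  rewrite -prodrXr; under eq_bigr => r _ do rewrite binomialX.
  by rewrite bigA_distr_bigA; apply: eq_bigr => b _; rewrite prodrMn prodrXr.
have coefXnMn k c : ('X^k *+ c : {poly int})`_t = if k == t then c%:R else 0.
  by rewrite coefMn coefXn eq_sym; case: eqP; rewrite ?mul1rn ?mul0rn.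
have := congr1 (fun p : {poly int} => p`_t) expandX.
rewrite exprD1n !coef_sum /=.
under eq_bigr => k _ do rewrite coefXnMn.
under [X in _ = X -> _]eq_bigr => b _ do rewrite coefXnMn.
rewrite -big_mkcond -[X in _ = X -> _]big_mkcond /= => <-.
by rewrite (big_ord1_eq _ (fun k => ('C(\sum_r a r, k))%:R)); case: ltnP => // /bin_small ->.
Qed.

Definition multinom (R : numFieldType) (I : finType) (v : I -> nat) : R :=
  ((\sum_r v r)`!)%:R / \prod_r ((v r)`!)%:R.

Lemma prod_fact_neq0 (R : numFieldType) (I : finType) (v : I -> nat) :
  \prod_r ((v r)`!)%:R != 0 :> R.
Proof. by rewrite prodf_seq_neq0; apply/allP => r _; rewrite pnatr_eq0 -lt0n fact_gt0. Qed.

(* Each summand is 'C(a, b) |b|! (|a| - |b|)! / a!; grouping the b by t = |b|,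
   sum_prod_binomial turns every group into |a|!. *)
Lemma sum_multinom_mul_sub (R : numFieldType) (I : finType) K (a : I -> nat) :
  (forall r, a r <= K)%N ->
  \sum_(b : {ffun I -> 'I_K.+1} | [forall r, b r <= a r]%N)
     multinom R (fun r => val (b r)) * multinom R (fun r => a r - b r)%N =
  ((\sum_r a r).+1)%:R * multinom R a.
Proof.
move=> aK; set A := (\sum_r a r)%N; set P := \prod_r ((a r)`!)%:R : R.
pose c (b : {ffun I -> 'I_K.+1}) := (\prod_r 'C(a r, b r))%N.
pose f t : R := (t`! * (A - t)`!)%:R.
have c0 (b : {ffun I -> 'I_K.+1}) : ~~ [forall r, b r <= a r]%N -> c b = 0%N.
  by case/forallPn => r; rewrite -ltnNge => /bin_small Cr0; rewrite /c (bigD1 r) //= Cr0.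
have summandE (b : {ffun I -> 'I_K.+1}) : [forall r, b r <= a r]%N ->
    multinom R (fun r => val (b r)) * multinom R (fun r => a r - b r)%N =
    (c b)%:R * f (\sum_r val (b r))%N / P.
  move=> /forallP ba.
  have eP : P = (c b)%:R * \prod_r ((b r)`!)%:R * \prod_r ((a r - b r)`!)%:R.
    rewrite /P /c natr_prod -!big_split /=; apply: eq_bigr => r _.
    by rewrite -!natrM -mulnA bin_fact.
  have cb0 : (c b)%:R != 0 :> R.
    by rewrite /c natr_prod prodf_seq_neq0; apply/allP => r _; rewrite pnatr_eq0 -lt0n bin_gt0 ba.
  rewrite /multinom sumnB // eP /f natrM; field.
  by rewrite cb0 !prod_fact_neq0.
have by_size (b : {ffun I -> 'I_K.+1}) : (c b)%:R * f (\sum_r val (b r))%N =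
    \sum_(t < A.+1 | t == (\sum_r val (b r))%N :> nat) (c b)%:R * f t.
  rewrite (big_ord1_eq _ (fun t => (c b)%:R * f t)).
  case: ltnP => // ltAb; rewrite c0 ?mul0r //; apply: contraTN ltAb => /forallP ba.
  by rewrite -leqNgt; apply: leq_sum => r _; apply: ba.
rewrite (eq_bigr _ summandE) -mulr_suml big_rmcond => [|b /c0 ->]; last by rewrite mul0r.
rewrite (eq_bigr _ (fun b _ => by_size b)) (exchange_big_dep xpredT) //=.
have group_size (t : 'I_A.+1) :
    \sum_(b : {ffun I -> 'I_K.+1} | t == (\sum_r val (b r))%N :> nat) (c b)%:R * f t = (A`!)%:R.
  under eq_bigl => b do rewrite eq_sym.
  by rewrite -mulr_suml -natr_sum sum_prod_binomial // -natrM bin_fact // -ltnS.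
rewrite (eq_bigr _ (fun t _ => group_size t)) sumr_const card_ord /multinom -/A -/P.
by rewrite -mulr_natr; ring.
Qed.

Definition queue_weight (R : numFieldType) (I : finType) (T : pred I) (nu : I -> R)
    (v : I -> nat) : R :=
  ((\sum_(r | T r) v r)`!)%:R / \prod_(r | T r) ((v r)`!)%:R * \prod_(r | T r) nu r ^- v r.

Lemma eq_queue_weight (R : numFieldType) (I : finType) (T T' : pred I) (nu nu' : I -> R)
    (v v' : I -> nat) :
  T =1 T' -> (forall r, T' r -> nu r = nu' r) -> (forall r, T' r -> v r = v' r) ->
  queue_weight T nu v = queue_weight T' nu' v'.
Proof.
move=> eqT eq_nu eq_v; rewrite /queue_weight !(eq_bigl _ _ eqT) (eq_bigr _ eq_v).
by congr (_ / _ * _); apply: eq_bigr => r Tr; rewrite (eq_v r Tr) ?(eq_nu r Tr).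
Qed.

Lemma queue_weightE (R : numFieldType) (I : finType) (T : pred I) (nu : I -> R) (v : I -> nat) :
  (forall r, ~~ T r -> v r = 0%N) -> queue_weight T nu v = multinom R v * \prod_r nu r ^- v r.
Proof.
move=> v0; rewrite /queue_weight /multinom.
by rewrite !(@big_rmcond _ _ _ _ _ T) // => r /v0 ->; rewrite ?expr0 ?invr1.
Qed.

(* Splitting the class counts a - e_i of one queue between two copies of it. *)
Lemma sum_queue_weight_split (R : numFieldType) (I : finType) K (T : pred I) (nu : I -> R)
    (a : I -> nat) i :
  nu i != 0 -> (0 < a i)%N -> (forall r, ~~ T r -> a r = 0%N) ->
  (forall r, a r - (r == i) <= K)%N ->
  \sum_(b : {ffun I -> 'I_K.+1} | [forall r, b r <= a r - (r == i)]%N)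
     queue_weight T nu (fun r => val (b r)) * queue_weight T nu (fun r => a r - (r == i) - b r)%N
  = nu i * (queue_weight T nu a * (a i)%:R).
Proof.
move=> nui0 ai_gt0 a0 aK; set a' := fun r => (a r - (r == i))%N.
have a'0 r : ~~ T r -> a' r = 0%N by move/a0; rewrite /a' => ->.
have summandE (b : {ffun I -> 'I_K.+1}) : [forall r, b r <= a' r]%N ->
    queue_weight T nu (fun r => val (b r)) * queue_weight T nu (fun r => a' r - b r)%N =
    multinom R (fun r => val (b r)) * multinom R (fun r => a' r - b r)%N * \prod_r nu r ^- a' r.
  move=> /forallP ba.
  rewrite queue_weightE => [|r /a'0 a'r0]; last by have := ba r; rewrite a'r0 leqn0 => /eqP.
  rewrite queue_weightE => [|r /a'0 -> //].
  rewrite mulrACA -big_split /=; congr (_ * _); apply: eq_bigr => r _.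
  by rewrite -invfM -exprD subnKC.
rewrite (eq_bigr _ summandE) -mulr_suml sum_multinom_mul_sub // queue_weightE //.
have sum_a : (\sum_r a r = (\sum_r a' r).+1)%N.
  rewrite (bigD1 i) //= [in RHS](bigD1 i) //= /a' eqxx.
  rewrite [in RHS](eq_bigr a) => [|r /negbTE ->]; last by rewrite subn0.
  by lia.
have prod_fact_a : \prod_r ((a r)`!)%:R = (a i)%:R * \prod_r ((a' r)`!)%:R :> R.
  rewrite (bigD1 i) //= [in RHS](bigD1 i) //= /a' eqxx subn1 mulrA -natrM.
  rewrite -[X in (X * _)%N](prednK ai_gt0) -factS prednK //.
  by congr (_ * _); apply: eq_bigr => r /negbTE ->; rewrite subn0.
have prod_nu_a : \prod_r nu r ^- a r = (nu i)^-1 * \prod_r nu r ^- a' r.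
  rewrite (bigD1 i) //= [in RHS](bigD1 i) //= /a' eqxx subn1 mulrA -invfM -exprS prednK //.
  by congr (_ * _); apply: eq_bigr => r /negbTE ->; rewrite subn0.
have ai0 : (a i)%:R != 0 :> R by rewrite pnatr_eq0 -lt0n.
rewrite /multinom sum_a prod_fact_a prod_nu_a factS natrM; field.
by rewrite prod_fact_neq0 ai0 nui0.
Qed.

Lemma big_option (T : Type) (idx : T) (op : Monoid.com_law idx) (J : finType)
    (F : option J -> T) :
  \big[op/idx]_(x : option J) F x = op (F None) (\big[op/idx]_(q : J) F (Some q)).
Proof.
rewrite (bigD1 None) //=; congr (op _ _).
by rewrite (reindex_omap Some id) => [|[x|]] //; apply: eq_bigl => q; rewrite eqxx.
Qed.

Lemma mem_plus_route_Some (J I : finType) (route : I -> {set J}) (j q : J) (r : I) :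
  (Some q \in plus_route route j r) = (q \in route r).
Proof.
rewrite /plus_route in_setU (mem_imset _ _ (@Some_inj _)).
by case: ifP => _; rewrite ?in_set1 ?in_set0 orbF.
Qed.

Lemma mem_plus_route_None (J I : finType) (route : I -> {set J}) (j : J) (r : I) :
  (None \in plus_route route j r) = (j \in route r).
Proof.
rewrite /plus_route in_setU; have /negbTE -> : None \notin Some @: route r by apply/imsetP => -[].
by case: ifP => _; rewrite ?in_set1 ?in_set0.
Qed.

Lemma sum_plus_route (J I : finType) (route : I -> {set J}) (j : J) K
    (m : {ffun option J * I -> 'I_K.+1}) r :
  (\sum_(x in plus_route route j r) val (m (x, r)) =
   (if j \in route r then val (m (None, r)) else 0) + \sum_(q in route r) val (m (Some q, r)))%N.
Proof.
rewrite big_mkcond big_option /= mem_plus_route_None; congr (_ + _)%N.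
by rewrite [RHS]big_mkcond; apply: eq_bigr => q _; rewrite mem_plus_route_Some.
Qed.

Lemma weightE (R : realType) (J I : finType) (route : I -> {set J}) (mu : J -> I -> R) K
    (m : {ffun J * I -> 'I_K.+1}) :
  weight route mu m =
  \prod_q queue_weight (fun r => q \in route r) (mu q) (fun r => val (m (q, r))).
Proof. by []. Qed.

Lemma weight_plus_route (R : realType) (J I : finType) (route : I -> {set J}) (mu : J -> I -> R)
    (j : J) K (m : {ffun option J * I -> 'I_K.+1}) :
  weight (plus_route route j) (plus_mu mu j) m =
  queue_weight (fun r => j \in route r) (mu j) (fun r => val (m (None, r))) *
  \prod_q queue_weight (fun r => q \in route r) (mu q) (fun r => val (m (Some q, r))).
Proof.
rewrite weightE big_option.
congr (_ * _).
  by apply: eq_queue_weight => // r; rewrite mem_plus_route_None.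
by apply: eq_bigr => q _; apply: eq_queue_weight => // r; rewrite mem_plus_route_Some.
Qed.

Definition nat_minus_e (I : finType) (n : I -> nat) (i r : I) : nat := (n r - (r == i))%N.

Lemma minus_eE (I : finType) (n : I -> nat) (i : I) :
  (0 < n i)%N -> minus_e n i = natvec (nat_minus_e n i).
Proof.
move=> ni_gt0; apply: boolp.funext => r; rewrite /minus_e /natvec /nat_minus_e subzn //.
by case: (eqVneq r i) => [->|].
Qed.

Lemma sum_nat_minus_e (I : finType) (n : I -> nat) (i : I) :
  (0 < n i)%N -> (\sum_r nat_minus_e n i r = (\sum_r n r).-1)%N.
Proof.
move=> ni_gt0; rewrite /nat_minus_e (bigD1 i) //= [in RHS](bigD1 i) //= eqxx.
by rewrite (eq_bigr n) => [|r /negbTE ->]; [lia | rewrite subn0].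
Qed.

Lemma nat_minus_e_le_sum (I : finType) (n : I -> nat) (i : I) r :
  (0 < n i)%N -> (nat_minus_e n i r <= (\sum_r n r).-1)%N.
Proof.
by move=> ni_gt0; rewrite -(sum_nat_minus_e ni_gt0) (bigD1 r) //= leq_addr.
Qed.

Section Configurations.

Variables (J I : finType) (route : I -> {set J}) (n : I -> nat) (K : nat).
Variable m : {ffun J * I -> 'I_K.+1}.
Hypothesis m_in_S : in_S route (natvec n) m.

Lemma in_S_off_route q r : q \notin route r -> val (m (q, r)) = 0%N.
Proof.
by move: m_in_S => /andP [/forallP /(_ q) /forallP /(_ r) /implyP mq0 _] /mq0 /eqP.
Qed.

Lemma in_S_route_sum r : (\sum_(q in route r) val (m (q, r)))%N = n r.
Proof. by move: m_in_S => /andP [_ /forallP /(_ r) /eqP []]. Qed.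

Lemma in_S_le q r : (val (m (q, r)) <= n r)%N.
Proof.
case: (boolP (q \in route r)) => [qr | /in_S_off_route -> //].
by rewrite -in_S_route_sum (bigD1 q) //= leq_addr.
Qed.

Lemma in_S_add_le q q' r :
  q' \in route r -> q != q' -> (val (m (q, r)) + val (m (q', r)) <= n r)%N.
Proof.
move=> q'r qq'; case: (boolP (q \in route r)) => [qr | /in_S_off_route ->]; last exact: in_S_le.
by rewrite -in_S_route_sum (bigD1 q) //= (bigD1 q') /= ?q'r 1?eq_sym //; lia.
Qed.

End Configurations.

Definition counts {Q I : finType} {K : nat} (m : {ffun Q * I -> 'I_K.+1}) (q : Q) :
    {ffun I -> 'I_K.+1} :=
  [ffun r => m (q, r)].

Section Replica.

Variables (R : realType) (J I : finType) (route : I -> {set J}) (mu : J -> I -> R).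
Variables (n : I -> nat) (j : J) (i : I) (K K' : nat).
Hypotheses (ji : j \in route i) (ni_gt0 : (0 < n i)%N).
Hypotheses (K_def : (K = \sum_r n r)%N) (K'_def : (K' = (\sum_r n r).-1)%N).

Local Notation cfg := {ffun J * I -> 'I_K.+1}.
Local Notation cfg' := {ffun option J * I -> 'I_K'.+1}.
Local Notation in_S_n m := (in_S route (natvec n) m).
Local Notation in_S_plus m' := (in_S (plus_route route j) (natvec (nat_minus_e n i)) m').

(* The
   truncations by inord never act on configurations (merge_replicaE, split_replicaE). *)
Definition merge_replica (m' : cfg') : cfg :=
  [ffun p => inord (if p.1 == j then val (m' (Some j, p.2)) + val (m' (None, p.2)) + (p.2 == i)
                    else val (m' (Some p.1, p.2)))%N].

Definition split_replica (m : cfg) (b : {ffun I -> 'I_K'.+1}) : cfg' :=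
  [ffun p => inord (match p.1 with
                    | Some q => if q == j then val (b p.2) else val (m (q, p.2))
                    | None => val (m (j, p.2)) - (p.2 == i) - b p.2 end)%N].

Lemma in_S_le_minus_e (m : cfg) q r : in_S_n m -> q != j -> (0 < val (m (j, i)))%N ->
  (val (m (q, r)) <= nat_minus_e n i r)%N.
Proof.
move=> mS qj mji_gt0; rewrite /nat_minus_e; case: (eqVneq r i) => [->|_].
  by have := in_S_add_le mS ji qj; lia.
by rewrite subn0 (in_S_le mS).
Qed.

Lemma merge_replicaE (m' : cfg') q r : in_S_plus m' ->
  val (merge_replica m' (q, r)) =
  (if q == j then val (m' (Some j, r)) + val (m' (None, r)) + (r == i)
   else val (m' (Some q, r)))%N.
Proof.
move=> m'S; rewrite ffunE /= inordK // ltnS K_def.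
have n_le_sum : (n r <= \sum_r n r)%N by rewrite (bigD1 r) //= leq_addr.
case: ifP => _.
  have ri_le : ((r == i) <= n r)%N by case: (eqVneq r i) => [->|].
  apply: leq_trans n_le_sum; rewrite -(subnK ri_le) leq_add2r.
  case: (boolP (j \in route r)) => jr.
    by apply: (in_S_add_le m'S); rewrite ?mem_plus_route_None.
  by rewrite !(in_S_off_route m'S) ?mem_plus_route_Some ?mem_plus_route_None.
apply: leq_trans (in_S_le m'S (Some q) r) _.
exact: leq_trans (leq_subr _ _) n_le_sum.
Qed.

Lemma merge_replica_in_S (m' : cfg') : in_S_plus m' -> in_S_n (merge_replica m').
Proof.
move=> m'S; have merge_off_j q r : q != j -> val (merge_replica m' (q, r)) = val (m' (Some q, r)).
  by move=> /negbTE qj; rewrite merge_replicaE // qj.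
apply/andP; split.
  apply/forallP => q; apply/forallP => r; apply/implyP => qr.
  case: (eqVneq q j) => [qj | /merge_off_j ->]; last first.
    by rewrite (in_S_off_route m'S) ?mem_plus_route_Some.
  subst q; have ri : r != i by apply: contraNneq qr => ->.
  by rewrite merge_replicaE // eqxx !(in_S_off_route m'S) ?mem_plus_route_Some
    ?mem_plus_route_None // (negbTE ri).
apply/forallP => r; apply/eqP; rewrite /natvec; congr Posz.
have := in_S_route_sum m'S r; rewrite sum_plus_route /nat_minus_e.
case: (boolP (j \in route r)) => jr.
  have ri_le : ((r == i) <= n r)%N by case: (eqVneq r i) => [->|].
  rewrite (bigD1 j) // [in X in _ -> X](bigD1 j) // merge_replicaE // eqxx.
  rewrite [in X in _ -> X](eq_bigr (fun q => val (m' (Some q, r))));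
    last by move=> q /andP [_ /merge_off_j].
  by simpl in *; lia.
rewrite [in X in _ -> X](eq_bigr (fun q => val (m' (Some q, r)))) => [|q qr]; last first.
  by apply: merge_off_j; apply: contraTneq qr => ->.
have ri : r != i by apply: contraNneq jr => ->.
by rewrite (negbTE ri) subn0 add0n.
Qed.

Lemma split_replicaE (m : cfg) (b : {ffun I -> 'I_K'.+1}) x r :
  in_S_n m -> (0 < val (m (j, i)))%N ->
  val (split_replica m b (x, r)) =
  (match x with Some q => if q == j then val (b r) else val (m (q, r))
              | None => val (m (j, r)) - (r == i) - b r end)%N.
Proof.
move=> mS mji_gt0; rewrite ffunE /= inordK // ltnS.
have le_K' := nat_minus_e_le_sum r ni_gt0; rewrite -K'_def /nat_minus_e in le_K'.
case: x => [q|]; last by have /= := in_S_le mS j r; lia.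
case: ifP => [_ | /negbT qj]; first by rewrite -ltnS.
by have /= := in_S_le_minus_e r mS qj mji_gt0; rewrite /nat_minus_e; lia.
Qed.

Lemma split_replica_in_S (m : cfg) (b : {ffun I -> 'I_K'.+1}) :
  in_S_n m -> (0 < val (m (j, i)))%N -> (forall r, b r <= val (m (j, r)) - (r == i))%N ->
  in_S_plus (split_replica m b).
Proof.
move=> mS mji_gt0 b_le; have split_val x r := split_replicaE b x r mS mji_gt0.
apply/andP; split.
  apply/forallP => x; apply/forallP => r; apply/implyP; rewrite split_val.
  case: x => [q|]; last by rewrite mem_plus_route_None => /(in_S_off_route mS) ->.
  rewrite mem_plus_route_Some => qr.
  case: (eqVneq q j) => [qj|_]; last by rewrite (in_S_off_route mS qr).
  by subst q; have := b_le r; rewrite (in_S_off_route mS qr) sub0n leqn0.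
apply/forallP => r; apply/eqP; rewrite /natvec; congr Posz; rewrite sum_plus_route.
have := in_S_route_sum mS r; rewrite /nat_minus_e.
case: (boolP (j \in route r)) => jr.
  have ri_le : ((r == i) <= val (m (j, r)))%N by case: (eqVneq r i) => [->|].
  rewrite (bigD1 j) // [in X in _ -> X](bigD1 j) // !split_val eqxx.
  rewrite [in X in _ -> X](eq_bigr (fun q => val (m (q, r)))) => [|q /andP [_ /negbTE qj]].
    by have := b_le r; simpl in *; lia.
  by rewrite split_val qj.
rewrite [in X in _ -> X](eq_bigr (fun q => val (m (q, r)))) => [|q qr]; last first.
  by rewrite split_val; case: eqP => // qj; rewrite -qj qr in jr.
have ri : r != i by apply: contraNneq jr => ->.
by rewrite (negbTE ri) subn0 add0n.
Qed.

Lemma split_merge_replica (m : cfg) (m' : cfg') :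
  in_S_n m -> (0 < val (m (j, i)))%N -> in_S_plus m' -> merge_replica m' = m ->
  split_replica m (counts m' (Some j)) = m'.
Proof.
move=> mS mji_gt0 m'S merge_m'; apply/ffunP => -[x r]; apply: val_inj.
rewrite split_replicaE // -merge_m'; case: x => [q|]; rewrite merge_replicaE //.
  by case: eqP => [->|]; rewrite ?ffunE.
by rewrite eqxx ffunE /=; lia.
Qed.

Lemma split_replica_fibre (m : cfg) (b : {ffun I -> 'I_K'.+1}) :
  in_S_n m -> (0 < val (m (j, i)))%N ->
  (in_S_plus (split_replica m b) && (merge_replica (split_replica m b) == m))
    && (counts (split_replica m b) (Some j) == b) =
  [forall r, b r <= val (m (j, r)) - (r == i)]%N.
Proof.
move=> mS mji_gt0; have split_val x r := split_replicaE b x r mS mji_gt0.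
apply/idP/idP.
  case/andP => /andP [m'S /eqP merge_m] _; apply/forallP => r.
  have := congr1 (fun m0 : cfg => val (m0 (j, r))) merge_m.
  by rewrite /= merge_replicaE // eqxx !split_val eqxx; simpl in *; lia.
move=> /forallP b_le; have m'S := split_replica_in_S mS mji_gt0 b_le.
rewrite m'S andTb; apply/andP; split; apply/eqP.
  apply/ffunP => -[q r]; apply: val_inj; rewrite merge_replicaE //.
  case: (eqVneq q j) => [->|qj]; rewrite !split_val ?eqxx ?(negbTE qj) //.
  have ri_le : ((r == i) <= val (m (j, r)))%N by case: (eqVneq r i) => [->|].
  by have := b_le r; simpl in *; lia.
by apply/ffunP => r; apply: val_inj; rewrite ffunE split_val eqxx.
Qed.

Lemma weight_split_replica (m : cfg) (b : {ffun I -> 'I_K'.+1}) :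
  in_S_n m -> (0 < val (m (j, i)))%N ->
  weight (plus_route route j) (plus_mu mu j) (split_replica m b) =
  queue_weight (fun r => j \in route r) (mu j) (fun r => val (m (j, r)) - (r == i) - b r)%N *
  (queue_weight (fun r => j \in route r) (mu j) (fun r => val (b r)) *
   \prod_(q | q != j) queue_weight (fun r => q \in route r) (mu q) (fun r => val (m (q, r)))).
Proof.
move=> mS mji_gt0; have split_val x r := split_replicaE b x r mS mji_gt0.
rewrite weight_plus_route (bigD1 j) //; congr (_ * (_ * _)).
- by apply: eq_queue_weight => // r _; rewrite split_val.
- by apply: eq_queue_weight => // r _; rewrite split_val eqxx.
- by apply: eq_bigr => q qj; apply: eq_queue_weight => // r _; rewrite split_val (negbTE qj).
Qed.

Lemma sum_weight_fibre (m : cfg) : in_S_n m -> mu j i != 0 ->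
  \sum_(m' : cfg' | in_S_plus m' && (merge_replica m' == m))
     weight (plus_route route j) (plus_mu mu j) m' =
  mu j i * (weight route mu m * (val (m (j, i)))%:R).
Proof.
move=> mS muji0; have [mji0 | mji_gt0] := posnP (val (m (j, i))).
  rewrite mji0 !mulr0 big_pred0 // => m'; apply/negP => /andP [m'S /eqP merge_m].
  by move: mji0; rewrite -merge_m merge_replicaE // !eqxx => /eqP; rewrite addn_eq0 andbF.
rewrite (reindex_onto (split_replica m) (counts^~ (Some j))) => [|m' /andP [m'S /eqP]]; last first.
  exact: split_merge_replica.
rewrite (eq_bigl _ _ (fun b => split_replica_fibre b mS mji_gt0)).
rewrite (eq_bigr _ (fun b _ => weight_split_replica b mS mji_gt0)).
under eq_bigr do rewrite mulrCA mulrA.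
rewrite -mulr_suml.
have off_route r : j \notin route r -> val (m (j, r)) = 0%N.
  by move=> jr; rewrite (in_S_off_route mS jr).
have le_K' r : (val (m (j, r)) - (r == i) <= K')%N.
  rewrite K'_def; apply: leq_trans (nat_minus_e_le_sum r ni_gt0).
  by apply: leq_sub2r; exact: in_S_le mS j r.
rewrite (sum_queue_weight_split (a := fun r => val (m (j, r))) muji0 mji_gt0 off_route le_K').
by rewrite weightE [in RHS](bigD1 j) //=; ring.
Qed.

Lemma sum_weight_plus_route : mu j i != 0 ->
  \sum_(m' : cfg' | in_S_plus m') weight (plus_route route j) (plus_mu mu j) m' =
  mu j i * \sum_(m : cfg | in_S_n m) weight route mu m * (val (m (j, i)))%:R.
Proof.
move=> muji0; rewrite (partition_big merge_replica (fun m : cfg => in_S_n m)); last first.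
  exact: merge_replica_in_S.
by rewrite mulr_sumr; apply: eq_bigr => m mS; exact: sum_weight_fibre.
Qed.

End Replica.

Theorem lemma6 (R : realType) (J I : finType) (route : I -> {set J})
  (mu : J -> I -> R) (mu_pos : forall j i, j \in route i -> 0 < mu j i)
  (n : I -> nat) (j : J) (i : I)
  (hJ : in_Jcirc route mu n j) (hji : j \in route i) :
  EM route mu n j i =
  (mu j i)^-1 * (Bconst (plus_route route j) (plus_mu mu j) (minus_e n i)
                 / Bconst route mu (natvec n)).
Proof.
have muji0 : mu j i != 0 by rewrite gt_eqF // mu_pos.
have -> : EM route mu n j i =
    (\sum_(m : {ffun J * I -> 'I_(cfg_bound (natvec n)).+1} | in_S route (natvec n) m)
       weight route mu m * (val (m (j, i)))%:R) / Bconst route mu (natvec n).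
  by rewrite /EM mulr_suml; apply: eq_bigr => m _; rewrite mulrAC.
have [ni0 | ni_gt0] := posnP (n i).
  have -> : Bconst (plus_route route j) (plus_mu mu j) (minus_e n i) = 0.
    rewrite /Bconst big_pred0 // => m'; apply/negP => /andP [_ /forallP /(_ i)].
    by rewrite /minus_e ni0 eqxx.
  rewrite big1 ?mul0r ?mulr0 // => m mS.
  by have := in_S_le mS j i; rewrite ni0 leqn0 => /eqP ->; rewrite mulr0.
have K'_def : cfg_bound (natvec (nat_minus_e n i)) = (\sum_r n r).-1 := sum_nat_minus_e ni_gt0.
rewrite minus_eE // /Bconst (sum_weight_plus_route hji ni_gt0 (erefl _) K'_def muji0).
by rewrite mulrA mulrA mulVf // mul1r.
Qed.
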